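(* There is an absolute constant $C$ such that for every alphabet $\Sigma$, every positive integer $d$, every string $T$ over $\Sigma$ of length $n>d$, and every integer $i$ with $1\le i\le n-d$, $|\mathsf{MAW}(T[i..i+d-1])\bigtriangleup\mathsf{MAW}(T[i+1..i+d])|\le Cd$ (i.e., it is $O(d)$). Also, there is an absolute constant $c>0$ such that for every $d\ge 1$ there exist a string $T'$ and an integer $j$ with $1\le j\le|T'|-d$ satisfying $|\mathsf{MAW}(T'[j..j+d-1])\bigtriangleup\mathsf{MAW}(T'[j+1..j+d])|\ge cd$ (i.e., it is $\Omega(d)$).
   Context: For a string $S$ over alphabet $\Sigma$, a string $w\in\Sigma^*$ is a minimal absent word (MAW) of $S$ if $w$ does not occur in $S$ but every proper substring of $w$ (including the empty string) occurs in $S$; $\mathsf{MAW}(S)$ is the set of all MAWs of $S$. $T[a..b]$ denotes the substring of $T$ from position $a$ to $b$; $\bigtriangleup$ is symmetric difference. *)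

From mathcomp Require Import all_boot all_order all_algebra.
Set Implicit Arguments. Unset Strict Implicit. Unset Printing Implicit Defensive.

Definition occurs (Sigma : eqType) (w S : seq Sigma) : bool := infix w S.

Definition MAW (Sigma : eqType) (S w : seq Sigma) : Prop :=
  ~~ occurs w S /\ (forall u : seq Sigma, infix u w -> u != w -> occurs u S).

Definition MAW_symdiff (Sigma : eqType) (S1 S2 w : seq Sigma) : Prop :=
  (MAW S1 w /\ ~ MAW S2 w) \/ (MAW S2 w /\ ~ MAW S1 w).

(* |X| <= k for a set X of words: X is finite and has at most k elements,
   i.e. it is enumerated by a duplicate-free list of length <= k. *)
Definition card_le (Sigma : eqType) (X : seq Sigma -> Prop) (k : rat) : Prop :=
  exists s : seq (seq Sigma), [/\ uniq s, (forall w, w \in s <-> X w)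
                                 & ((size s)%:R <= k)%R].

Definition card_ge (Sigma : eqType) (X : seq Sigma -> Prop) (k : rat) : Prop :=
  exists s : seq (seq Sigma), [/\ uniq s, (forall w, w \in s -> X w)
                                 & (k <= (size s)%:R)%R].

(* 1-based substring T[i..i+d-1] *)
Definition window (Sigma : Type) (T : seq Sigma) (i d : nat) : seq Sigma :=
  take d (drop i.-1 T).

(* Write the two windows as aX and Xb.  A word w that is minimal absent in aX
   but not in Xb either occurs in Xb, and is then a suffix of Xb, or has a
   proper factor u absent from Xb.  Such a u occurs in aX only as a prefix, so
   deleting the first or the last letter of w leaves a nonempty prefix v of aX.
   If w = xv, then v is the shortest prefix of aX with xv absent from aX, so w
   is determined by the letter x.  If w = zty with v = zt, then ty occurs in aX
   at some position p, while the occurrence of t at position 1 is followed by a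
   letter other than y (otherwise w would occur); so |t| is the longest common
   extension of positions 1 and p, and w is determined by p.  Hence at most
   3|X| + 4 words are lost, and reversing both windows turns gained words into
   lost ones.  For the lower bound, sliding 0 1 ... d-1 to 1 2 ... d loses [d]
   and [0; k] for 2 <= k < d, and gains [0]. *)

From mathcomp Require Import all_boot all_order all_algebra.
From mathcomp Require Import zify.
From Stdlib Require Import Classical ClassicalEpsilon.

Set Implicit Arguments. Unset Strict Implicit. Unset Printing Implicit Defensive.
Import Order.TTheory GRing.Theory Num.Theory.

Lemma find_iota0 (p : pred nat) n k :
  k < n -> p k -> (forall j, j < k -> ~~ p j) -> find p (iota 0 n) = k.
Proof.
move=> kn pk before_k; have -> : n = k + (n - k).-1.+1 by lia.
rewrite iotaD find_cat size_iota /= add0n pk addn0.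
suff -> : has p (iota 0 k) = false by [].
by apply/hasPn => j; rewrite mem_iota add0n => /before_k.
Qed.

Section Factors.
Variable Sigma : eqType.
Implicit Types (a b x y : Sigma) (s t u v w X : seq Sigma).

Lemma proper_infix_cons_rcons u w : infix u w -> u != w ->
  (exists x v, w = x :: v /\ infix u v) \/ (exists v y, w = rcons v y /\ infix u v).
Proof.
move/infixP => [s1 [s2 ->]]; case: s1 => [|x s1] /= ne.
  case/lastP: s2 ne => [|s2 y]; first by rewrite cats0 eqxx.
  by right; exists (u ++ s2), y; rewrite rcons_cat; split=> //; exact: prefix_infix.
by left; exists x, (s1 ++ u ++ s2); split=> //; exact: infix_infix.
Qed.

Lemma lost_infix_prefix a b X u :
  infix u (a :: X) -> ~~ infix u (rcons X b) -> prefix u (a :: X).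
Proof. by rewrite infix_consl infix_rconsl => /orP [| ->] //; rewrite orbT. Qed.

Lemma new_infix_suffix a b X u :
  infix u (rcons X b) -> ~~ infix u (a :: X) -> suffix u (rcons X b).
Proof. by rewrite infix_consl infix_rconsl => /orP [| ->] //; rewrite orbT. Qed.

Definition suffixes s := [seq drop k s | k <- iota 0 (size s).+1].

Lemma mem_suffixes u s : suffix u s -> u \in suffixes s.
Proof.
rewrite suffixE => /eqP <-; apply: (map_f (drop^~ s)).
by rewrite mem_iota add0n ltnS leq_subr.
Qed.

Fixpoint lcp s t : nat :=
  if (s, t) is (x :: s', y :: t') then (if x == y then (lcp s' t').+1 else 0)
  else 0.

Lemma lcp_cat u s t : lcp (u ++ s) (u ++ t) = size u + lcp s t.
Proof. by elim: u => //= x u ->; rewrite eqxx. Qed.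

End Factors.

Section MinimalAbsentWords.
Variable Sigma : eqType.
Implicit Types (a b x y z : Sigma) (t u v w S X : seq Sigma).

Lemma MAW_occurs_shorter S w u :
  MAW S w -> infix u w -> size u < size w -> occurs u S.
Proof.
by move=> [_ minw] uw lt; apply: minw uw _; apply: contraTneq lt => ->; rewrite ltnn.
Qed.

Lemma MAW_rev S w : MAW (rev S) (rev w) <-> MAW S w.
Proof.
suff revMAW S' w' : MAW S' w' -> MAW (rev S') (rev w').
  by split; [move/revMAW; rewrite !revK | exact: revMAW].
move=> [absent minw]; split; first by rewrite /occurs infix_rev.
move=> u uw ne; rewrite /occurs -[u]revK infix_rev; apply: minw.
  by rewrite -infix_rev revK.
by apply: contra ne => /eqP <-; rewrite revK.
Qed.

Lemma MAW_letter S x : x \notin S -> MAW S [:: x].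
Proof.
move=> xS; split; first by rewrite /occurs infix1s.
move=> u; rewrite infixs1 => /orP [/eqP -> _ | /eqP ->]; first exact: infix0s.
by rewrite eqxx.
Qed.

Lemma MAW_pair S x y : x \in S -> y \in S -> ~~ infix [:: x; y] S -> MAW S [:: x; y].
Proof.
move=> xS yS absent; split=> // u uw ne.
have occurs_letter_factor c : c \in S -> infix u [:: c] -> occurs u S.
  by move=> cS; rewrite infixs1 => /orP [] /eqP ->; rewrite /occurs ?infix0s ?infix1s.
case: (proper_infix_cons_rcons uw ne) => [[x' [v [[_ <-]]]] | [v [y' []]]].
  exact: occurs_letter_factor.
by case: v => [|c [|c' r]] //= [<- _]; [exact: occurs_letter_factor | case: r].
Qed.

Definition absent_ext_len S x :=
  find (fun k => ~~ infix (x :: take k S) S) (iota 0 (size S).+1).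

Definition cons_prefix_cands S := [seq x :: take (absent_ext_len S x) S | x <- S].

Lemma MAW_cons_prefix S x v :
  v != [::] -> MAW S (x :: v) -> prefix v S -> x :: v \in cons_prefix_cands S.
Proof.
move=> v0 mw pv; have ev : take (size v) S = v by apply/eqP; rewrite -prefixE.
have xS : x \in S.
  rewrite -infix1s; apply: (MAW_occurs_shorter mw); last by case: (v) v0.
  exact: (prefix_infix [:: x] v).
apply/mapP; exists x => //.
suff -> : absent_ext_len S x = size v by rewrite ev.
apply: find_iota0; first by rewrite ltnS size_prefix.
  by rewrite /= ev; case: mw.
move=> j jv; rewrite negbK.
have -> : take j S = take j v by rewrite -ev take_takel // ltnW.
apply: (MAW_occurs_shorter mw); last by rewrite /= ltnS (size_takel (ltnW jv)).
by apply: prefixW; rewrite prefix_cons eqxx prefix_take.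
Qed.

Definition mismatch_ext S p :=
  let l := lcp (behead S) (drop p S) in take l.+1 S ++ take 1 (drop (p + l) S).

Definition rcons_prefix_cands S := [seq mismatch_ext S p | p <- iota 0 (size S)].

Lemma MAW_rcons_prefix S v y :
  v != [::] -> MAW S (rcons v y) -> prefix v S -> rcons v y \in rcons_prefix_cands S.
Proof.
case: v => [//|z t] _ mw /prefixP [r ES].
have [s1 [s2 ES']] : exists s1 s2, S = s1 ++ rcons t y ++ s2.
  apply/infixP/(MAW_occurs_shorter mw); last by rewrite !size_rcons.
  by rewrite rcons_cons; exact: infix_cons.
have dropS : drop (size s1) S = t ++ y :: s2 by rewrite ES' drop_size_cat // cat_rcons.
have r_mismatch : lcp r (y :: s2) = 0.
  case: r ES => [//|c r] ES /=; case: eqP => // cy; case: mw.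
  by rewrite /occurs ES cy -cat_rcons prefix_infix.
apply/mapP; exists (size s1).
  by rewrite mem_iota add0n ES' !size_cat size_rcons; lia.
rewrite /mismatch_ext /=.
have -> : lcp (behead S) (drop (size s1) S) = size t.
  by rewrite dropS {1}ES /= lcp_cat r_mismatch addn0.
have -> : take 1 (drop (size s1 + size t) S) = [:: y].
  by rewrite addnC -drop_drop dropS drop_size_cat //= take0.
by rewrite ES take_size_cat // cats1.
Qed.

Lemma lost_MAW_shape a X b w : MAW (a :: X) w -> ~ MAW (rcons X b) w ->
  [\/ suffix w (rcons X b),
      exists x v, [/\ w = x :: v, v != [::] & prefix v (a :: X)] |
      exists v y, [/\ w = rcons v y, v != [::] & prefix v (a :: X)]].
Proof.
move=> mw not_mwB; have [absent _] := mw.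
case occB: (occurs w (rcons X b)).
  by constructor 1; exact: new_infix_suffix occB absent.
have [u [uw u_neq absentB]] :
    exists u, [/\ infix u w, u != w & ~~ occurs u (rcons X b)].
  apply: NNPP => none; apply: not_mwB; split; first by rewrite occB.
  by move=> u uw ne; apply: NNPP => /negP absentB; apply: none; exists u.
have lost_prefix v : infix u v -> infix v w -> size v < size w ->
    v != [::] /\ prefix v (a :: X).
  move=> uv vw lt; split.
    apply: contraNneq absentB => v0; move: uv.
    by rewrite v0 infixs0 => /eqP ->; exact: infix0s.
  apply: lost_infix_prefix; first exact: MAW_occurs_shorter mw vw lt.
  by apply: contraNN absentB; exact: infix_trans.
case: (proper_infix_cons_rcons uw u_neq) => [[x [v [ew uv]]] | [v [y [ew uv]]]];
  rewrite ew in lost_prefix *.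
  by constructor 2; exists x, v; have [] := lost_prefix v uv (infix_cons v x) (ltnSn _).
constructor 3; exists v, y; have [] := lost_prefix v uv (infix_rcons v y) _ => //.
by rewrite size_rcons.
Qed.

Definition lost_MAW_cands a X b :=
  suffixes (rcons X b) ++ cons_prefix_cands (a :: X) ++ rcons_prefix_cands (a :: X).

Lemma lost_MAW_candsP a X b w :
  MAW (a :: X) w -> ~ MAW (rcons X b) w -> w \in lost_MAW_cands a X b.
Proof.
move=> mw not_mwB; rewrite !mem_cat.
case: (lost_MAW_shape mw not_mwB) => [sw | [x [v [ew v0 pv]]] | [v [y [ew v0 pv]]]].
- by rewrite mem_suffixes.
- by rewrite ew MAW_cons_prefix ?orbT // -ew.
- by rewrite ew MAW_rcons_prefix ?orbT // -ew.
Qed.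

Lemma size_lost_MAW_cands a X b : size (lost_MAW_cands a X b) = 3 * size X + 4.
Proof. by rewrite !size_cat !size_map !size_iota size_rcons /=; lia. Qed.

End MinimalAbsentWords.

Lemma card_le_cover (T : eqType) (P : seq T -> Prop) (cover : seq (seq T)) (k : rat) :
  (forall w, P w -> w \in cover) -> ((size cover)%:R <= k)%R -> card_le P k.
Proof.
move=> coverP le_k.
pose inP w : bool := if excluded_middle_informative (P w) then true else false.
exists (undup [seq w <- cover | inP w]); split.
- exact: undup_uniq.
- move=> w; rewrite mem_undup mem_filter /inP.
  by case: excluded_middle_informative => Pw; split=> // _; exact: coverP.
- apply: le_trans le_k; rewrite ler_nat.
  by apply: leq_trans (size_undup _) _; rewrite size_filter count_size.
Qed.

Lemma card_MAW_symdiff_slide (Sigma : eqType) (a b : Sigma) X :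
  card_le (MAW_symdiff (a :: X) (rcons X b)) (8%:R * (size X).+1%:R)%R.
Proof.
pose cover := lost_MAW_cands a X b ++ map rev (lost_MAW_cands b (rev X) a).
apply: (@card_le_cover _ _ cover).
- move=> w [[mA not_mB] | [mB not_mA]]; rewrite mem_cat; first by rewrite lost_MAW_candsP.
  apply/orP; right; rewrite -[w]revK map_f // lost_MAW_candsP //.
    by rewrite -rev_rcons MAW_rev.
  by rewrite -rev_cons MAW_rev.
- by rewrite size_cat size_map !size_lost_MAW_cands size_rev -natrM ler_nat; lia.
Qed.

Lemma window_slide (Sigma : Type) (T : seq Sigma) i d :
  0 < d -> 1 <= i <= size T - d ->
  exists a X b, [/\ window T i d = a :: X, window T i.+1 d = rcons X b & size X = d.-1].
Proof.
move=> d0 /andP [i1 iT].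
have : d < size (drop i.-1 T) by rewrite size_drop; lia.
have -> : window T i.+1 d = take d (behead (drop i.-1 T)).
  by rewrite /window -drop1 drop_drop; congr (take _ (drop _ _)); lia.
rewrite /window; case: (drop i.-1 T) => [//|a Y] /= dY.
exists a, (take d.-1 Y), (nth a Y d.-1); split.
- by rewrite -{1}(prednK d0).
- by rewrite -take_nth prednK //; lia.
- by rewrite size_takel //; lia.
Qed.

Lemma infix_pair_iota x y m n : infix [:: x; y] (iota m n) -> y = x.+1.
Proof.
elim: n m => [|n IH] m //; rewrite [iota _ _]/= infix_consl => /orP [|/IH //].
by case: n {IH} => [|n] /=; [rewrite andbF | case/and3P => /eqP -> /eqP ->].
Qed.

Lemma card_MAW_symdiff_iota d : 0 < d ->
  card_ge (MAW_symdiff (iota 0 d) (iota 1 d)) d%:R.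
Proof.
move=> d0; exists ([:: 0] :: [:: d] :: [seq [:: 0; k] | k <- iota 2 (d - 2)]); split.
- rewrite /= !inE map_inj_uniq ?iota_uniq; last by move=> ? ? [].
  rewrite andbT negb_or -andbA; apply/and3P; split.
  + by apply/eqP => -[d_eq0]; rewrite -d_eq0 in d0.
  + by apply/mapP => -[].
  + by apply/mapP => -[].
- move=> w; rewrite !inE => /orP [/eqP -> | /orP [/eqP -> | /mapP [k kI ->]]].
  + right; split; first by apply: MAW_letter; rewrite mem_iota.
    by move=> [+ _]; rewrite /occurs infix1s mem_iota add0n d0.
  + left; split; first by apply: MAW_letter; rewrite mem_iota add0n ltnn andbF.
    by move=> [+ _]; rewrite /occurs infix1s mem_iota add1n ltnSn d0.
  + move: kI; rewrite mem_iota => /andP [k2 kd].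
    left; split.
      apply: MAW_pair; rewrite ?mem_iota; try lia.
      by apply/negP => /infix_pair_iota k1; lia.
    move=> mw; have := MAW_occurs_shorter mw (prefix_infix [:: 0] [:: k]) isT.
    by rewrite /occurs infix1s mem_iota.
- by rewrite /= size_map size_iota ler_nat; lia.
Qed.

Theorem corollary3 :
  (exists C : rat,
     forall (Sigma : eqType) (d : nat) (T : seq Sigma) (i : nat),
       0 < d -> d < size T -> 1 <= i <= size T - d ->
       card_le (MAW_symdiff (window T i d) (window T i.+1 d)) (C * d%:R)%R)
  /\
  (exists c : rat, (0 < c)%R /\
     forall d : nat, 1 <= d ->
       exists (Sigma : eqType) (T' : seq Sigma) (j : nat),
         1 <= j <= size T' - d /\
         card_ge (MAW_symdiff (window T' j d) (window T' j.+1 d)) (c * d%:R)%R).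
Proof.
split.
- exists (8%:R)%R => Sigma d T i d0 _ iT.
  have [a [X [b [-> -> sX]]]] := window_slide d0 iT.
  by rewrite -(prednK d0) -sX; exact: card_MAW_symdiff_slide.
- exists 1%R; split=> // d d1; exists nat, (iota 0 d.+1), 1; split.
    by rewrite size_iota subSnn.
  rewrite mul1r /window !drop_iota !take_iota /= subn1 /= minnn.
  by rewrite (minn_idPl (leqnSn d)); exact: card_MAW_symdiff_iota.
Qed.
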